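(* If an atomic flow is normal for $\mathsf c$, then all its $\mathsf{ai}$-paths are clean paths.
   Context: An atomic flow is a tuple $(V,E,\eta,up,lo)$: finite sets of vertices and edges, a labelling of vertices by interaction, cut, weakening, coweakening, contraction or cocontraction, and maps $up:E\to V\cup\{\top\}$, $lo:E\to V\cup\{\bot\}$. Upper edges of $\nu$: $lo(\epsilon)=\nu$; lower edges: $up(\epsilon)=\nu$. (Upper, lower) edge numbers: $(0,2)$ interaction, $(2,0)$ cut, $(0,1)$ weakening, $(1,0)$ coweakening, $(2,1)$ contraction, $(1,2)$ cocontraction; no directed cycles; there is $\pi:E\to\{+,-\}$ giving all edges of a (co)contraction the same sign and the two edges of an interaction/cut different signs. A path from $\nu$ to $\nu'$ is a sequence of edges $\epsilon_1,\dots,\epsilon_h$ with $lo(\epsilon_i)=up(\epsilon_{i+1})$, $up(\epsilon_1)=\nu$, $lo(\epsilon_h)=\nu'$; its reversal is a path from $\nu'$ to $\nu$. An $\mathsf{ai}$-path from $\nu$ to $\nu'$ is either a path from $\nu$ to $\nu'$ or a sequence $\epsilon_1,\dots,\epsilon_k,\epsilon_{k+1},\dots,\epsilon_h$ with $\epsilon_k\neq\epsilon_{k+1}$ such that, for some interaction or cut vertex $\nu''$, $\epsilon_1,\dots,\epsilon_k$ is an $\mathsf{ai}$-path from $\nu$ to $\nu''$ and $\epsilon_{k+1},\dots,\epsilon_h$ is an $\mathsf{ai}$-path from $\nu''$ to $\nu'$. An $\mathsf{ai}$-connection is a path from an interaction vertex to a cut vertex or from a cut vertex to an interaction vertex. A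 simple edge is an $\mathsf{ai}$-connection consisting of a single edge. A clean path is an $\mathsf{ai}$-path in which every $\mathsf{ai}$-connection (occurring in it) is a simple edge. A flow is normal for $\mathsf c$ if none of the following patterns occurs in it: (c1) a contraction whose lower edge is an upper edge of a cut; (c2) an interaction one of whose lower edges is the upper edge of a cocontraction; (c3) a contraction whose lower edge is the upper edge of a cocontraction. *)

From mathcomp Require Import all_boot.
Set Implicit Arguments. Unset Strict Implicit. Unset Printing Implicit Defensive.

Inductive vkind := Interaction | Cut | Weakening | Coweakening
                 | Contraction | Cocontraction.

Section AtomicFlows.
Variables (V E : finType) (eta : V -> vkind).
(* up e = None means up(e) = top ; lo e = None means lo(e) = bottom. *)
Variables (up lo : E -> option V).

(* upper edges of v: lo e = v ; lower edges of v: up e = v *)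
Definition n_upper (v : V) : nat := #|[set e : E | lo e == Some v]|.
Definition n_lower (v : V) : nat := #|[set e : E | up e == Some v]|.

Definition edge_numbers (k : vkind) : nat * nat :=
  match k with
  | Interaction => (0, 2) | Cut => (2, 0)
  | Weakening => (0, 1) | Coweakening => (1, 0)
  | Contraction => (2, 1) | Cocontraction => (1, 2)
  end.

Fixpoint dpath (v : V) (s : seq E) (w : V) : Prop :=
  match s with
  | [::] => False
  | e :: s' => up e = Some v /\
      match s' with
      | [::] => lo e = Some w
      | _ :: _ => exists x, lo e = Some x /\ dpath x s' w
      end
  end.

Definition fpath (v : V) (s : seq E) (w : V) : Prop :=
  dpath v s w \/ dpath w (rev s) v.

Definition incident (v : V) (e : E) : Prop := up e = Some v \/ lo e = Some v.

Definition is_atomic_flow : Prop :=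
  (forall v, (n_upper v, n_lower v) = edge_numbers (eta v)) /\
  (forall v s, ~ dpath v s v) /\
  (exists pi : E -> bool,
     forall v e1 e2, incident v e1 -> incident v e2 ->
       ((eta v = Contraction \/ eta v = Cocontraction) -> pi e1 = pi e2) /\
       ((eta v = Interaction \/ eta v = Cut) -> e1 <> e2 -> pi e1 <> pi e2)).

Definition interaction_or_cut (v : V) : Prop :=
  eta v = Interaction \/ eta v = Cut.

Inductive aipath : V -> seq E -> V -> Prop :=
| aipath_path v s w : fpath v s w -> aipath v s w
| aipath_cat v s1 e1 u e2 s2 w :
    aipath v (rcons s1 e1) u -> aipath u (e2 :: s2) w -> e1 <> e2 ->
    interaction_or_cut u ->
    aipath v (rcons s1 e1 ++ e2 :: s2) w.

Definition ai_connection (s : seq E) : Prop :=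
  exists a b, fpath a s b /\
    ((eta a = Interaction /\ eta b = Cut) \/
     (eta a = Cut /\ eta b = Interaction)).

Definition clean_path (v : V) (s : seq E) (w : V) : Prop :=
  aipath v s w /\ forall t, infix t s -> ai_connection t -> size t = 1.

Definition normal_for_c : Prop :=
  forall e : E,
    ~ ((exists x y, up e = Some x /\ lo e = Some y /\
                    eta x = Contraction /\ eta y = Cut) \/
       (exists x y, up e = Some x /\ lo e = Some y /\
                    eta x = Interaction /\ eta y = Cocontraction) \/
       (exists x y, up e = Some x /\ lo e = Some y /\
                    eta x = Contraction /\ eta y = Cocontraction)).

End AtomicFlows.

From mathcomp Require Import all_boot.

(* An ai-connection is a directed path from an interaction down to a cut,
   since a cut has no lower edges.  Its inner vertices have both upper and
   lower edges, hence are (co)contractions.  Normality forbids an interaction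
   from feeding a cocontraction and a contraction from feeding a cut or a
   cocontraction, so below a contraction only contractions follow and no cut
   is ever reached.  Thus the path has no inner vertex: it is a simple edge. *)

Section NormalFlows.
Variables (V E : finType) (eta : V -> vkind) (up lo : E -> option V).

Lemma n_upper_gt0 (e : E) z : lo e = Some z -> 0 < n_upper lo z.
Proof. by move=> lo_e; apply/card_gt0P; exists e; rewrite inE lo_e. Qed.

Lemma n_lower_gt0 (e : E) z : up e = Some z -> 0 < n_lower up z.
Proof. by move=> up_e; apply/card_gt0P; exists e; rewrite inE up_e. Qed.

Lemma dpath_cons2 {x e e' s y} :
  dpath up lo x [:: e, e' & s] y ->
  exists2 z, lo e = Some z & up e' = Some z /\ dpath up lo z (e' :: s) y.
Proof. by case=> _ [z [lo_e p]]; exists z => //; case: s p => [|? ?] p; case: (p). Qed.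

Hypothesis edge_counts :
  forall v, (n_upper lo v, n_lower up v) = edge_numbers (eta v).

Lemma inner_vertex_kind {e1 e2 z} : lo e1 = Some z -> up e2 = Some z ->
  eta z = Contraction \/ eta z = Cocontraction.
Proof.
move=> /n_upper_gt0 + /n_lower_gt0.
by have := edge_counts z; case: (eta z) => [] [-> ->]; auto.
Qed.

Lemma dpath_from_cut {x s y} : eta x = Cut -> ~ dpath up lo x s y.
Proof.
move=> cut_x; case: s => [|e s] [] // /n_lower_gt0 + _.
by have := edge_counts x; rewrite cut_x => -[_ ->].
Qed.

Hypothesis normal : normal_for_c eta up lo.

Lemma no_contraction_cut_edge {e x y} : up e = Some x -> lo e = Some y ->
  eta x = Contraction -> eta y = Cut -> False.
Proof. by move=> *; apply: (normal e); left; exists x, y. Qed.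

Lemma no_interaction_cocontraction_edge {e x y} : up e = Some x -> lo e = Some y ->
  eta x = Interaction -> eta y = Cocontraction -> False.
Proof. by move=> *; apply: (normal e); right; left; exists x, y. Qed.

Lemma no_contraction_cocontraction_edge {e x y} : up e = Some x -> lo e = Some y ->
  eta x = Contraction -> eta y = Cocontraction -> False.
Proof. by move=> *; apply: (normal e); right; right; exists x, y. Qed.

Lemma no_dpath_contraction_cut {x s y} :
  eta x = Contraction -> eta y = Cut -> ~ dpath up lo x s y.
Proof.
move=> + cut_y; elim: s x => [|e [|e' s] IH] x contr_x //.
  by case=> up_e lo_e; apply: (no_contraction_cut_edge up_e lo_e).
move=> p; have [z lo_e [up_e' p']] := dpath_cons2 p.
case: (inner_vertex_kind lo_e up_e') => [/IH|]; first exact.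
by apply: (no_contraction_cocontraction_edge p.1 lo_e).
Qed.

Lemma dpath_interaction_cut_size {x s y} :
  eta x = Interaction -> eta y = Cut -> dpath up lo x s y -> size s = 1.
Proof.
case: s => [|e [|e' s]] //= inter_x cut_y p.
have [z lo_e [up_e' p']] := dpath_cons2 p.
case: (inner_vertex_kind lo_e up_e') => kind_z.
  by case: (no_dpath_contraction_cut kind_z cut_y p').
by case: (no_interaction_cocontraction_edge p.1 lo_e inter_x kind_z).
Qed.

Lemma ai_connection_size t : ai_connection eta up lo t -> size t = 1.
Proof.
case=> a [b [p [[kind_a kind_b]|[kind_a kind_b]]]]; case: p => p.
- exact: dpath_interaction_cut_size p.
- by case: (dpath_from_cut kind_b p).
- by case: (dpath_from_cut kind_a p).
- by rewrite -size_rev; apply: dpath_interaction_cut_size p.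
Qed.

End NormalFlows.

Theorem proposition4p18 (V E : finType) (eta : V -> vkind)
    (up lo : E -> option V) :
  is_atomic_flow eta up lo ->
  normal_for_c eta up lo ->
  forall (v w : V) (s : seq E), aipath eta up lo v s w -> clean_path eta up lo v s w.
Proof.
move=> [edge_counts _] normal v w s p; split=> // t _.
exact: ai_connection_size edge_counts normal t.
Qed.
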